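(* Let $D_\infty=\mathbb{Z}/2\ast\mathbb{Z}/2$ be the infinite dihedral group. There is no finite generating set $S$ of $D_\infty$ (with $S=S^{-1}$, $e\notin S$) with respect to which $\kappa(g)=0$ for all $g\in D_\infty\smallsetminus\{e\}$.
   Context: For a group $G$ with finite generating set $S$ ($S=S^{-1}$, $e\notin S$), $|x|$ denotes the word length of $x\in G$ with respect to $S$. For $g\in G$ define $\mathrm{Av}(g)=\frac{1}{|S|}\sum_{a\in S}|a^{-1}ga|$, and for $g\neq e$ define the curvature $\kappa(g)=\frac{|g|-\mathrm{Av}(g)}{|g|}$. *)

From Stdlib Require Import ClassicalEpsilon.
From mathcomp Require Import all_boot all_order all_algebra.
Set Implicit Arguments. Unset Strict Implicit. Unset Printing Implicit Defensive.
Import Order.TTheory GRing.Theory Num.Theory.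
Local Open Scope ring_scope.

(* Concrete model of the infinite dihedral group D_oo = Z/2 * Z/2 ~ Z x| Z/2:
   the pair (k, b) stands for t^k r^b, where t is a translation of infinite
   order and r a reflection with r t r = t^-1. *)
Definition Dinf : Type := (int * bool)%type.

Definition dmul (x y : Dinf) : Dinf :=
  ((x.1 + (if x.2 then - y.1 else y.1))%R, addb x.2 y.2).

Definition dinv (x : Dinf) : Dinf :=
  if x.2 then x else ((- x.1)%R, false).

Definition de : Dinf := (0%R, false).

Fixpoint ball (S : seq Dinf) (n : nat) : seq Dinf :=
  match n with
  | 0 => [:: de]
  | n'.+1 => ball S n' ++ [seq dmul y s | y <- ball S n', s <- S]
  end.

(* S generates D_oo (as S = S^-1, monoid generation = group generation) *)
Definition generates (S : seq Dinf) : Prop := forall x, exists n, x \in ball S n.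

(* word length |x| w.r.t. S (0 if x is not reachable, irrelevant when S generates) *)
Definition wordlen (S : seq Dinf) (x : Dinf) : nat :=
  match excluded_middle_informative (exists n, x \in ball S n) with
  | left H => ex_minn H
  | right _ => 0%N
  end.

Definition Av (S : seq Dinf) (g : Dinf) : rat :=
  (\sum_(a <- S) ((wordlen S (dmul (dinv a) (dmul g a)))%:R : rat)) / (size S)%:R.

Definition kappa (S : seq Dinf) (g : Dinf) : rat :=
  (((wordlen S g)%:R : rat) - Av S g) / (wordlen S g)%:R.

From mathcomp Require Import all_boot all_order all_algebra.
From mathcomp Require Import zify ring.
From Stdlib Require Import ClassicalEpsilon.
Set Implicit Arguments. Unset Strict Implicit. Unset Printing Implicit Defensive.
Import Order.TTheory GRing.Theory Num.Theory.
Local Open Scope ring_scope.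

(* A generating set must contain a reflection g, so |g| = 1. Then kappa(g) = 0
   says that the average of |a^-1 g a| over a in S is 1; as every conjugate of
   a reflection is a reflection, hence nontrivial, all these lengths are 1,
   i.e. the reflections of S are closed under conjugation by S, hence by the
   whole group. But a reflection has infinitely many conjugates t^-n g t^n,
   while S is finite. *)

Definition conj (x g : Dinf) : Dinf := dmul (dinv x) (dmul g x).

Lemma conj_de (g : Dinf) : conj de g = g.
Proof. by case: g => k [] /=; rewrite /conj /dmul /=; congr pair; ring. Qed.

Lemma conj_mul (x y g : Dinf) : conj (dmul x y) g = conj y (conj x g).
Proof.
case: x y g => [a b] [c d] [k e]; rewrite /conj /dmul /dinv.
by case: b; case: d; case: e => /=; congr pair; ring.
Qed.

Lemma conj_refl (x g : Dinf) : (conj x g).2 = g.2.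
Proof. by case: x g => [a []] [k []]. Qed.

Lemma refl_neq_de (g : Dinf) : g.2 -> g != de.
Proof. by case: g => k [] //= _; rewrite xpair_eqE andbF. Qed.

Lemma conj_trans_inj (g : Dinf) :
  g.2 -> injective (fun n : nat => conj (n%:Z, false) g).
Proof. by case: g => k [] //= _ n m; rewrite /conj /dmul /= => -[]; lia. Qed.

Lemma seq_inj_nat_notin (T : eqType) (s : seq T) (h : nat -> T) :
  injective h -> ~ (forall n, h n \in s).
Proof.
move=> h_inj h_in.
have hs_sub : {subset map h (iota 0 (size s).+1) <= s}.
  by move=> x /mapP [n _ ->].
have := uniq_leq_size _ hs_sub.
by rewrite map_inj_uniq // iota_uniq size_map size_iota ltnn => /(_ isT).
Qed.

Lemma sum_gt0_eq_size (T : eqType) (s : seq T) (f : T -> nat) :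
  {in s, forall x, (0 < f x)%N} -> (\sum_(x <- s) f x)%N = size s ->
  {in s, forall x, f x = 1%N}.
Proof.
move=> f_gt0 sum_f x xs.
have : (\sum_(y <- s) (f y - 1) == 0)%N.
  rewrite -(eqn_add2l (size s)) addn0 -{2}sum_f -sum1_size -big_split /=.
  by apply/eqP/eq_big_seq => y ys; rewrite addnC subnK ?f_gt0.
rewrite sum_nat_seq_eq0 => /allP /(_ x xs) /=.
by have := f_gt0 x xs; lia.
Qed.

Lemma mem_ball1 (S : seq Dinf) x : (x \in ball S 1) = (x == de) || (x \in S).
Proof.
change (ball S 1) with ([:: de] ++ [seq dmul y s | y <- [:: de], s <- S]).
rewrite mem_cat inE; congr orb.
apply/allpairsP/idP => [[[y s] [/= + s_in ->]]|xS].
  by rewrite inE => /eqP ->; rewrite /dmul /= add0r; case: s s_in.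
by exists (de, x); rewrite /= inE eqxx /dmul /= add0r; case: x xS.
Qed.

Lemma ball_trans (S : seq Dinf) n x :
  all (fun s => ~~ s.2) S -> x \in ball S n -> ~~ x.2.
Proof.
move=> S_trans; elim: n x => [|n IHn] x /=; first by rewrite inE => /eqP ->.
rewrite mem_cat => /orP [/IHn //|/allpairsP [[y s] [/= y_in s_in ->]]].
by rewrite /dmul /= (negbTE (IHn y y_in)) (allP S_trans s s_in).
Qed.

Lemma generates_has_refl (S : seq Dinf) : generates S -> exists2 g, g \in S & g.2.
Proof.
move=> S_gen; case: (boolP (all (fun s => ~~ s.2) S)) => [S_trans|].
  by have [n /(ball_trans S_trans)] := S_gen (0, true).
by case/allPn => g gS /negPn; exists g.
Qed.

Section WordLength.

Variable S : seq Dinf.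
Hypothesis S_gen : generates S.

Lemma wordlenP x :
  x \in ball S (wordlen S x) /\ forall n, x \in ball S n -> (wordlen S x <= n)%N.
Proof.
rewrite /wordlen; case: excluded_middle_informative => [H|[]]; last exact: S_gen.
by case: (ex_minnP H).
Qed.

Lemma wordlen_gt0 x : x != de -> (0 < wordlen S x)%N.
Proof.
move=> x_neq; have [] := wordlenP x.
by case: (wordlen S x) => //=; rewrite inE (negbTE x_neq).
Qed.

Lemma wordlen_mem x : de \notin S -> x \in S -> wordlen S x = 1%N.
Proof.
move=> de_notin xS; have x_neq : x != de by apply: contraNneq de_notin => <-.
have [_ x_min] := wordlenP x.
have : (wordlen S x <= 1)%N by apply: x_min; rewrite mem_ball1 xS orbT.
by have := wordlen_gt0 x_neq; case: (wordlen S x) => [|[]].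
Qed.

Lemma wordlen_eq1 x : x != de -> wordlen S x = 1%N -> x \in S.
Proof.
move=> x_neq x_len; have [] := wordlenP x.
by rewrite x_len mem_ball1 (negbTE x_neq).
Qed.

End WordLength.

Lemma Av_eq1 (S : seq Dinf) g : S != [::] -> Av S g = 1 ->
  (\sum_(a <- S) wordlen S (conj a g))%N = size S.
Proof.
move=> S_nil /(congr1 (fun r => r * (size S)%:R)); rewrite /Av mulfVK; last first.
  by rewrite pnatr_eq0 size_eq0.
by rewrite mul1r -natr_sum => /eqP; rewrite eqr_nat => /eqP.
Qed.

Section FlatGeneratingSet.

Variable S : seq Dinf.
Hypotheses (S_gen : generates S) (de_notin_S : de \notin S).
Hypothesis kappa_S : forall g, g != de -> kappa S g = 0.

Lemma refl_conj_gen_mem a g : g \in S -> g.2 -> a \in S -> conj a g \in S.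
Proof.
move=> gS g_refl aS.
have conj_neq b : conj b g != de by apply: refl_neq_de; rewrite conj_refl.
have g_len := wordlen_mem S_gen de_notin_S gS.
have Av_g : Av S g = 1.
  by move/eqP: (kappa_S (refl_neq_de g_refl)); rewrite /kappa g_len divr1 subr_eq0 => /eqP <-.
have S_nil : S != [::] by case: (S) gS.
apply: (wordlen_eq1 S_gen (conj_neq a)).
by apply: (sum_gt0_eq_size _ (Av_eq1 S_nil Av_g)) => // b _; apply: wordlen_gt0.
Qed.

Lemma refl_conj_ball n x g : x \in ball S n -> g \in S -> g.2 -> conj x g \in S.
Proof.
elim: n x g => [|n IHn] x g /=; first by rewrite inE => /eqP -> gS _; rewrite conj_de.
rewrite mem_cat => /orP [x_in|/allpairsP [[y s] [/= y_in s_in ->]]] gS g_refl.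
  exact: IHn.
rewrite conj_mul; apply: refl_conj_gen_mem => //; first exact: IHn.
by rewrite conj_refl.
Qed.

Lemma refl_conj_mem x g : g \in S -> g.2 -> conj x g \in S.
Proof. by have [n] := S_gen x; apply: refl_conj_ball. Qed.

End FlatGeneratingSet.

Theorem mainTheorem5 :
  ~ (exists S : seq Dinf,
       [/\ uniq S,
           (forall s, s \in S -> dinv s \in S),
           de \notin S,
           generates S
         & forall g : Dinf, g != de -> kappa S g = 0]).
Proof.
move=> [S [_ _ de_notin_S S_gen kappa_S]].
have [g gS g_refl] := generates_has_refl S_gen.
apply: (seq_inj_nat_notin (conj_trans_inj g_refl)) => n.
exact: refl_conj_mem.
Qed.
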